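(* In the Waterfilling bucketing construction described in the context, let $A$ be the joint strategy matrix produced for a set of analysts and let $A'$ be the joint strategy matrix produced after additionally adding one analyst with weight $s_i>0$ and strategy matrix $A_i$ every column of which has $L_1$ norm $1$. Then $\|A'\|_1=\|A\|_1+s_i$.
   Context: Matrices have $n$ columns. For a matrix $M$, $\|M\|_1$ is the maximum over columns of the column's $L_1$ norm. Fix a norm $\|\cdot\|$ on row vectors. Each analyst $l$ has a weight $s_l>0$ and a strategy matrix $A_l$ whose every column has $L_1$ norm $1$. Bucketing: maintain a set $B$ of unit vectors $e$ with weights $f_B(e)>0$, initially empty; processing analyst $l$ means, for each nonzero row $v$ of $s_lA_l$, setting $e=v/\|v\|$ and, if $e\in B$, increasing $f_B(e)$ by $\|v\|$, otherwise adding $e$ to $B$ with $f_B(e)=\|v\|$. The joint strategy matrix has one row $f_B(e)e$ for each $e\in B$. *)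

From HB Require Import structures.
From mathcomp Require Import all_boot all_order all_algebra.
Set Implicit Arguments. Unset Strict Implicit. Unset Printing Implicit Defensive.
Import Order.TTheory GRing.Theory Num.Theory.
Local Open Scope ring_scope.

Section Waterfilling.
Variables (R : realFieldType) (n : nat).

Definition is_norm (N : 'rV[R]_n -> R) : Prop :=
  [/\ forall x y, N (x + y) <= N x + N y,
      forall (a : R) x, N (a *: x) = `|a| * N x
    & forall x, N x = 0 -> x = 0].

Definition norm1 (m : nat) (M : 'M[R]_(m, n)) : R :=
  \big[Num.max/0]_(j < n) \sum_(i < m) `|M i j|.

Definition cols_L1_one (m : nat) (M : 'M[R]_(m, n)) : Prop :=
  forall j : 'I_n, \sum_(i < m) `|M i j| = 1.

Record analyst := Analyst {
  an_weight : R;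
  an_rows : nat;
  an_strat : 'M[R]_(an_rows, n) }.

(* A bucket set B: a list of pairs (e, f_B(e)) with distinct unit vectors e. *)
Definition buckets := seq ('rV[R]_n * R).

Definition bucket_row (N : 'rV[R]_n -> R) (B : buckets) (v : 'rV[R]_n)
  : buckets :=
  if v == 0 then B else
  let e := (N v)^-1 *: v in
  if e \in map fst B then
    map (fun p => if p.1 == e then (p.1, p.2 + N v) else p) B
  else rcons B (e, N v).

Definition bucket_analyst (N : 'rV[R]_n -> R) (B : buckets) (a : analyst)
  : buckets :=
  foldl (fun B' (i : 'I_(an_rows a)) =>
           bucket_row N B' (row i (an_weight a *: an_strat a)))
        B (enum 'I_(an_rows a)).

Definition bucketing (N : 'rV[R]_n -> R) (ans : seq analyst) : buckets :=
  foldl (bucket_analyst N) [::] ans.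

Definition joint_matrix (B : buckets) : 'M[R]_(size B, n) :=
  \matrix_(k < size B, j < n) ((nth (0, 0) B k).2 * (nth (0, 0) B k).1 0 j).

End Waterfilling.

(* Membership of an analyst in a list (analysts do not form an eqType). *)
Fixpoint in_list (T : Type) (x : T) (s : seq T) : Prop :=
  if s is y :: s' then y = x \/ in_list x s' else False.

From HB Require Import structures.
From mathcomp Require Import all_boot all_order all_algebra.
Set Implicit Arguments. Unset Strict Implicit. Unset Printing Implicit Defensive.
Import Order.TTheory GRing.Theory Num.Theory.
Local Open Scope ring_scope.

(* Follow the L1 norm of each column j of the joint matrix.  A nonzero row v
   either opens a new bucket, whose row is v itself, or raises the weight f of
   the bucket e = v/|v| by |v|.  Bucket weights stay nonnegative and bucket
   directions distinct, so in the second case exactly one row f e becomes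
   (f + |v|) e, whose j-th entry has absolute value |f e_j| + |v_j|.  Either
   way column j gains exactly |v_j|, hence an analyst of weight s whose columns
   have L1 norm 1 adds s to every column.  All columns of the joint matrix thus
   have L1 norm equal to the total weight, which grows by s_i. *)

Section Bucketing.
Variables (R : realFieldType) (n : nat) (N : 'rV[R]_n -> R).
Hypothesis normN : is_norm N.

Lemma norm_ge0 x : 0 <= N x.
Proof.
case: normN => normD normZ _.
have N0 : N 0 = 0 by rewrite -(scale0r (0 : 'rV[R]_n)) normZ normr0 mul0r.
have := normD x (- x); rewrite subrr N0 -scaleN1r normZ normrN normr1 mul1r.
by rewrite -mulr2n pmulrn_lge0.
Qed.

Lemma norm_gt0 v : v != 0 -> 0 < N v.
Proof.
move=> v_neq0; rewrite lt_def norm_ge0 andbT; apply: contra v_neq0 => /eqP.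
by case: normN => _ _ /[apply] ->.
Qed.

Definition bucket_colsum (B : buckets R n) (j : 'I_n) : R :=
  \sum_(p <- B) `|p.2 * p.1 0 j|.

Lemma joint_matrix_colsum B j :
  \sum_(k < size B) `|joint_matrix B k j| = bucket_colsum B j.
Proof.
rewrite /bucket_colsum (big_nth (0, 0)) big_mkord.
by apply: eq_bigr => k _; rewrite mxE.
Qed.

Lemma norm1_joint_matrix B c : (0 < n)%N ->
  (forall j, bucket_colsum B j = c) -> norm1 (joint_matrix B) = c.
Proof.
move=> n_gt0 colsumB; rewrite /norm1.
under eq_bigr => j _ do rewrite joint_matrix_colsum colsumB.
have c_ge0 : 0 <= c by rewrite -(colsumB (Ordinal n_gt0)) sumr_ge0.
apply/le_anti; rewrite bigmax_le //=.
exact: (le_bigmax _ _ (Ordinal n_gt0)).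
Qed.

Definition wf_buckets (B : buckets R n) : bool :=
  uniq (map fst B) && all (fun p => 0 <= p.2) B.

Lemma wf_bucket_row B v : wf_buckets B -> wf_buckets (bucket_row N B v).
Proof.
rewrite /bucket_row => wfB; case: eqP => // _.
case/andP: wfB => uniqB wB; case: ifP => e_in; apply/andP; split.
- by rewrite -map_comp (eq_map (g := fst)) // => p /=; case: ifP.
- apply/allP=> _ /mapP[p pB ->]; have := allP wB p pB.
  by case: ifP => //= _ p_ge0; rewrite addr_ge0 ?norm_ge0.
- by rewrite map_rcons rcons_uniq e_in.
- by rewrite all_rcons /= norm_ge0.
Qed.

Lemma bucket_row_colsum B v j : wf_buckets B ->
  bucket_colsum (bucket_row N B v) j = bucket_colsum B j + `|v 0 j|.
Proof.
case/andP=> uniqB wB; rewrite /bucket_row.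
have [->|v_neq0] := eqVneq v 0; first by rewrite mxE normr0 addr0.
have Nv_gt0 := norm_gt0 v_neq0.
set e := (N v)^-1 *: v.
have Nv_e : `|N v * e 0 j| = `|v 0 j|.
  by rewrite /e mxE mulrA mulfV ?mul1r ?gt_eqF.
case: ifPn => e_in; last by rewrite /bucket_colsum big_rcons /= Nv_e.
rewrite /bucket_colsum big_map.
transitivity (\sum_(p <- B) (`|p.2 * p.1 0 j| + (p.1 == e)%:R * `|v 0 j|)).
  apply: eq_big_seq => p pB; have p_ge0 := allP wB p pB.
  case: eqP => [->|_] /=; last by rewrite mul0r addr0.
  rewrite mul1r -Nv_e !normrM (ger0_norm p_ge0).
  by rewrite (gtr0_norm Nv_gt0) ger0_norm ?mulrDl // addr_ge0 // ltW.
rewrite big_split /= -big_distrl /=; congr (_ + _).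
have one_bucket : \sum_(k <- map fst B) (k == e)%:R = 1 :> R.
  rewrite (big_rem e e_in) eqxx big1_seq /= ?addr0 // => k.
  by rewrite mem_rem_uniq // inE => /andP[/negbTE ->].
by rewrite -(big_map fst predT (fun k => (k == e)%:R)) one_bucket mul1r.
Qed.

Definition bucket_rows m (M : 'M[R]_(m, n)) (B : buckets R n) (r : seq 'I_m)
    : buckets R n :=
  foldl (fun B' i => bucket_row N B' (row i M)) B r.

Lemma wf_bucket_rows m (M : 'M[R]_(m, n)) B r :
  wf_buckets B -> wf_buckets (bucket_rows M B r).
Proof. by elim: r B => //= i r IH B wfB; apply/IH/wf_bucket_row. Qed.

Lemma bucket_rows_colsum m (M : 'M[R]_(m, n)) B r j : wf_buckets B ->
  bucket_colsum (bucket_rows M B r) j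
  = bucket_colsum B j + \sum_(i <- r) `|M i j|.
Proof.
elim: r B => [|i r IH] B wfB /=; first by rewrite big_nil addr0.
by rewrite IH ?wf_bucket_row // bucket_row_colsum // big_cons mxE addrA.
Qed.

Lemma wf_bucket_analyst B a : wf_buckets B -> wf_buckets (bucket_analyst N B a).
Proof. exact: wf_bucket_rows. Qed.

Lemma bucket_analyst_colsum B a j :
  wf_buckets B -> 0 <= an_weight a -> cols_L1_one (an_strat a) ->
  bucket_colsum (bucket_analyst N B a) j = bucket_colsum B j + an_weight a.
Proof.
move=> wfB wa_ge0 colsA; rewrite [LHS]bucket_rows_colsum // big_enum /=.
under eq_bigr => i _ do rewrite mxE normrM (ger0_norm wa_ge0).
by rewrite -mulr_sumr colsA mulr1.
Qed.

Lemma wf_foldl_bucket_analyst B ans :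
  wf_buckets B -> wf_buckets (foldl (bucket_analyst N) B ans).
Proof. by elim: ans B => //= a ans IH B wfB; apply/IH/wf_bucket_analyst. Qed.

Lemma foldl_bucket_analyst_colsum B ans j : wf_buckets B ->
  (forall l, in_list l ans -> 0 <= an_weight l /\ cols_L1_one (an_strat l)) ->
  bucket_colsum (foldl (bucket_analyst N) B ans) j
  = bucket_colsum B j + \sum_(l <- ans) an_weight l.
Proof.
elim: ans B => [|a ans IH] B wfB ans_ok /=; first by rewrite big_nil addr0.
have [wa_ge0 colsA] := ans_ok a (or_introl erefl).
rewrite IH ?wf_bucket_analyst //; last by move=> l l_in; apply: ans_ok; right.
by rewrite bucket_analyst_colsum // big_cons addrA.
Qed.

End Bucketing.

Theorem mainTheorem4 (R : realFieldType) (n : nat) (N : 'rV[R]_n -> R)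
  (ans : seq (analyst R n)) (a : analyst R n) :
  (0 < n)%N ->
  is_norm N ->
  (forall l, in_list l ans -> 0 < an_weight l /\ cols_L1_one (an_strat l)) ->
  0 < an_weight a -> cols_L1_one (an_strat a) ->
  norm1 (joint_matrix (bucketing N (rcons ans a)))
  = norm1 (joint_matrix (bucketing N ans)) + an_weight a.
Proof.
move=> n_gt0 normN ans_ok wa_gt0 colsA.
have wf_ans : wf_buckets (bucketing N ans) by apply: wf_foldl_bucket_analyst.
have colsum_ans j :
    bucket_colsum (bucketing N ans) j = \sum_(l <- ans) an_weight l.
  rewrite foldl_bucket_analyst_colsum //; last by move=> l /ans_ok[/ltW].
  by rewrite /bucket_colsum big_nil add0r.
rewrite (norm1_joint_matrix n_gt0 colsum_ans).
apply: norm1_joint_matrix => // j.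
by rewrite /bucketing foldl_rcons bucket_analyst_colsum ?colsum_ans ?ltW.
Qed.
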